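(* Every binary network that admits an HGT-consistent labelling is orchard.
   Context: A (directed phylogenetic) network on a finite taxa set $X$ is a directed acyclic graph without parallel arcs whose nodes are of the following types: a unique root (indegree 0, outdegree 1); tree nodes (indegree 1, outdegree at least 2); reticulations (indegree at least 2, outdegree 1); leaves (indegree 1, outdegree 0), the leaves being bijectively labelled by $X$. Non-leaf nodes are called internal. A network is binary if every tree node and every reticulation has total degree (indegree plus outdegree) exactly 3. A tree is a network without reticulations. Orchard networks: An ordered pair of leaves $(x,y)$ is a cherry if $x$ and $y$ have a common parent; it is a reticulated cherry if the parent $p_x$ of $x$ is a reticulation and $p_x$ and $y$ have a common parent. Let $p_x,p_y$ be the parents of $x,y$. Reducing $(x,y)$ in a network $N$: if $(x,y)$ is a cherry, delete $x$ and suppress $p_x$ if it now has indegree 1 and outdegree 1; if $(x,y)$ is a reticulated cherry, delete the arc $(p_y,p_x)$ and suppress any resulting node of indegree 1 and outdegree 1; otherwise do nothing. (Suppressing a node $v$ with one parent $u$ and one child $w$ means deleting $v$ and adding the arc $(u,w)$.) For a sequence $S$ of ordered pairs, $NS$ denotes the result of reducing the pairs of $S$ in order. $N$ is orchard if there is a sequence $S$ such that $NS$ is a tree with exactly one leaf. HGT-consistent labelling: Let $N$ be a binary network with node set $V$. An HGT-consistent labelling of $N$ is a map $t:V\to\mathbb{R}$ such that (1) for every arc $(u,v)$, $t(u)\le t(v)$, and equality is allowed only if $v$ is a reticulation; (2) every internal node $u$ has a child $v$ with $t(u)<t(v)$; (3) for every reticulation $r$ with parents $u$ and $v$, exactly one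 of $t(u)=t(r)$ and $t(v)=t(r)$ holds. *)

From Stdlib Require Import Reals Relations.
From mathcomp Require Import all_boot.

Set Implicit Arguments.
Unset Strict Implicit.
Unset Printing Implicit Defensive.

(* A directed graph is given by its list of arcs on nodes of type nat.
   Leaves are labelled by themselves (the taxa set X is the set of leaves). *)
Definition arcs := seq (nat * nat).

Definition nodes (A : arcs) : seq nat :=
  undup (flatten [seq [:: a.1; a.2] | a <- A]).

Definition indeg (A : arcs) (v : nat) : nat := count (fun a => a.2 == v) A.
Definition outdeg (A : arcs) (v : nat) : nat := count (fun a => a.1 == v) A.

(* some parent / child of v (the unique one when indeg / outdeg is 1) *)
Definition parent (A : arcs) (v : nat) : nat :=
  head 0 [seq a.1 | a <- A & a.2 == v].
Definition child (A : arcs) (v : nat) : nat :=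
  head 0 [seq a.2 | a <- A & a.1 == v].

Definition is_root (A : arcs) v := (indeg A v == 0) && (outdeg A v == 1).
Definition is_tree_node (A : arcs) v := (indeg A v == 1) && (2 <= outdeg A v).
Definition is_ret (A : arcs) v := (2 <= indeg A v) && (outdeg A v == 1).
Definition is_leaf (A : arcs) v := (indeg A v == 1) && (outdeg A v == 0).

Definition arc_rel (A : arcs) : relation nat := fun u w => (u, w) \in A.

Definition acyclic (A : arcs) : Prop :=
  forall v, ~ clos_trans nat (arc_rel A) v v.

(* directed phylogenetic network (no parallel arcs = uniq list of arcs) *)
Definition network (A : arcs) : Prop :=
  [/\ uniq A, acyclic A,
      count (fun v => indeg A v == 0) (nodes A) = 1 &
      forall v, v \in nodes A ->
        [|| is_root A v, is_tree_node A v, is_ret A v | is_leaf A v]].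

Definition binary (A : arcs) : Prop :=
  forall v, v \in nodes A ->
    (is_tree_node A v -> outdeg A v = 2) /\ (is_ret A v -> indeg A v = 2).

Definition is_tree (A : arcs) : Prop :=
  network A /\ forall v, v \in nodes A -> ~~ is_ret A v.

Definition leaves (A : arcs) : seq nat := [seq v <- nodes A | is_leaf A v].

Definition is_cherry (A : arcs) (x y : nat) : bool :=
  [&& x != y, is_leaf A x, is_leaf A y & parent A x == parent A y].

Definition is_ret_cherry (A : arcs) (x y : nat) : bool :=
  [&& x != y, is_leaf A x, is_leaf A y, is_ret A (parent A x)
    & (parent A y, parent A x) \in A].

Definition suppress (A : arcs) (v : nat) : arcs :=
  if (indeg A v == 1) && (outdeg A v == 1) then
    (parent A v, child A v) :: [seq a <- A | (a.1 != v) && (a.2 != v)]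
  else A.

Definition reduce (A : arcs) (xy : nat * nat) : arcs :=
  let: (x, y) := xy in
  if is_cherry A x y then
    let px := parent A x in
    suppress [seq a <- A | a != (px, x)] px
  else if is_ret_cherry A x y then
    let px := parent A x in
    let py := parent A y in
    suppress (suppress [seq a <- A | a != (py, px)] px) py
  else A.

Definition reduce_seq (A : arcs) (S : seq (nat * nat)) : arcs :=
  foldl reduce A S.

Definition orchard (A : arcs) : Prop :=
  exists S : seq (nat * nat),
    is_tree (reduce_seq A S) /\ size (leaves (reduce_seq A S)) = 1.

Definition HGT_consistent (A : arcs) (t : nat -> R) : Prop :=
  [/\ (forall u v, (u, v) \in A -> Rle (t u) (t v) /\ (t u = t v -> is_ret A v)),
      (forall u, u \in nodes A -> 0 < outdeg A u ->
         exists v, (u, v) \in A /\ Rlt (t u) (t v)) &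
      (forall r u v, is_ret A r -> (u, r) \in A -> (v, r) \in A -> u <> v ->
         (t u = t r <-> t v <> t r))].

From Stdlib Require Import Reals Relations Lra.
From mathcomp Require Import all_boot.

Set Implicit Arguments.
Unset Strict Implicit.
Unset Printing Implicit Defensive.

(* Induction on the number of arcs.  Let m be an internal node of maximal label.
   By condition (2) every internal node has a child of strictly larger label, which by
   maximality of t m must be a leaf.  If m is a tree node, its other child is either a leaf
   (a cherry) or, having label at most t m, a reticulation r with t r = t m.  If m is a
   reticulation, condition (3) gives a parent u of m with t u = t m, necessarily a tree
   node.  In both reticulation cases u has a leaf child y and r a leaf child x, so (x, y)
   is a reticulated cherry.  Reducing a cherry removes the arcs at the suppressed nodes and
   adds shortcut arcs along which t strictly increases; hence the result is again a binary
   network, t stays HGT-consistent, and it has fewer arcs. *)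

Lemma size_le_count (T : eqType) (P : pred T) (s l : seq T) :
  uniq l -> (forall b, b \in l -> (b \in s) && P b) -> size l <= count P s.
Proof.
move=> ul H; rewrite -size_filter; apply: uniq_leq_size => // b /H.
by rewrite mem_filter andbC.
Qed.

Lemma count_le_size (T : eqType) (P : pred T) (s l : seq T) :
  uniq s -> (forall b, b \in s -> P b -> b \in l) -> count P s <= size l.
Proof.
move=> us H; rewrite -size_filter; apply: uniq_leq_size; first exact: filter_uniq.
by move=> b; rewrite mem_filter => /andP[Pb bs]; apply: H.
Qed.

Lemma count_eq_size (T : eqType) (P : pred T) (s l : seq T) :
  uniq s -> uniq l -> (forall b, (b \in s) && P b = (b \in l)) -> count P s = size l.
Proof.
move=> us ul H; apply/eqP; rewrite eqn_leq count_le_size ?size_le_count //.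
- by move=> b; rewrite H.
- by move=> b bs Pb; rewrite -H bs.
Qed.

Lemma count_pred0_in (T : eqType) (P : pred T) (s : seq T) :
  (forall b, b \in s -> ~~ P b) -> count P s = 0.
Proof. by move=> H; rewrite (eq_in_count (a2 := pred0)) ?count_pred0 // => b /H/negbTE. Qed.

Lemma exists_argmax (t : nat -> R) (s : seq nat) :
  s != [::] -> exists2 m, m \in s & forall w, w \in s -> Rle (t w) (t m).
Proof.
elim: s => //= a s IH _; case: (eqVneq s [::]) => [->|/IH [m ms Hm]].
  by exists a; rewrite ?mem_head // => w; rewrite inE => /eqP->; lra.
case: (Rle_lt_dec (t a) (t m)) => h.
  by exists m => [|w]; rewrite inE ?ms ?orbT // => /orP[/eqP->|/Hm].
by exists a => [|w]; rewrite inE ?eqxx // => /orP[/eqP->|/Hm]; lra.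
Qed.

Definition internal (A : arcs) (w : nat) : bool := is_tree_node A w || is_ret A w.

Definition touches (D : seq nat) (a : nat * nat) : bool := (a.1 \in D) || (a.2 \in D).

Lemma mem_nodes A w : (w \in nodes A) = (0 < indeg A w + outdeg A w).
Proof.
rewrite /nodes mem_undup addn_gt0 /indeg /outdeg -!has_count.
elim: A => //= a A IH; rewrite !inE IH (eq_sym w a.1) (eq_sym w a.2).
by case: (a.1 == w); case: (a.2 == w); case: (has _ A); case: (has _ A).
Qed.

Lemma indeg_gt0 A a b : (a, b) \in A -> 0 < indeg A b.
Proof. by move=> ab; rewrite /indeg -has_count; apply/hasP; exists (a, b). Qed.

Lemma outdeg_gt0 A a b : (a, b) \in A -> 0 < outdeg A a.
Proof. by move=> ab; rewrite /outdeg -has_count; apply/hasP; exists (a, b). Qed.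

Lemma mem_nodes_src A a b : (a, b) \in A -> a \in nodes A.
Proof. by move=> ab; rewrite mem_nodes addn_gt0 (outdeg_gt0 ab) orbT. Qed.

Lemma mem_nodes_tgt A a b : (a, b) \in A -> b \in nodes A.
Proof. by move=> ab; rewrite mem_nodes addn_gt0 (indeg_gt0 ab). Qed.

Lemma arc_neq A a b : acyclic A -> (a, b) \in A -> a != b.
Proof. by move=> acA ab; apply/eqP => e; subst; apply: (acA b); apply: t_step. Qed.

Lemma leaf_neq_src A x a b : is_leaf A x -> (a, b) \in A -> a != x.
Proof.
by case/andP=> _ /eqP x0 ab; apply/eqP => e; move: (outdeg_gt0 ab); rewrite e x0.
Qed.

Lemma exists_parent A v : 0 < indeg A v -> exists p, (p, v) \in A.
Proof. by rewrite -has_count => /hasP [[p w] pw /= /eqP e]; exists p; rewrite -e. Qed.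

Lemma exists_other_parent A v p :
  uniq A -> 2 <= indeg A v -> exists2 q, (q, v) \in A & q != p.
Proof.
move=> uA i2.
case: (boolP (has (fun a => (a.2 == v) && (a.1 != p)) A)) => [|/hasPn none].
  by case/hasP=> -[q w] qw /andP[/eqP /= e nq]; exists q; rewrite -?e.
suff : indeg A v <= 1 by rewrite leqNgt i2.
apply: (count_le_size (l := [:: (p, v)])) => // -[q w] qw /= /eqP e; subst w.
by move: (none _ qw); rewrite /= eqxx negbK => /eqP->; rewrite mem_head.
Qed.

Lemma exists_other_child A v c :
  uniq A -> 2 <= outdeg A v -> exists2 d, (v, d) \in A & d != c.
Proof.
move=> uA o2.
case: (boolP (has (fun a => (a.1 == v) && (a.2 != c)) A)) => [|/hasPn none].
  by case/hasP=> -[w d] wd /andP[/eqP /= e nd]; exists d; rewrite -?e.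
suff : outdeg A v <= 1 by rewrite leqNgt o2.
apply: (count_le_size (l := [:: (v, c)])) => // -[w d] wd /= /eqP e; subst w.
by move: (none _ wd); rewrite /= eqxx negbK => /eqP->; rewrite mem_head.
Qed.

Lemma parent_indeg1 A v p q :
  uniq A -> indeg A v = 1 -> (p, v) \in A -> (q, v) \in A -> q = p.
Proof.
move=> uA i1 pv qv; case: (eqVneq q p) => // nq.
have : 2 <= indeg A v.
  apply: (size_le_count (l := [:: (p, v); (q, v)])).
    by rewrite /= inE xpair_eqE eqxx andbT eq_sym (negbTE nq).
  by move=> b; rewrite !inE => /orP[]/eqP->; rewrite eqxx andbT.
by rewrite i1.
Qed.

Lemma child_outdeg1 A v c d :
  uniq A -> outdeg A v = 1 -> (v, c) \in A -> (v, d) \in A -> d = c.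
Proof.
move=> uA o1 vc vd; case: (eqVneq d c) => // nd.
have : 2 <= outdeg A v.
  apply: (size_le_count (l := [:: (v, c); (v, d)])).
    by rewrite /= inE xpair_eqE eqxx eq_sym (negbTE nd).
  by move=> b; rewrite !inE => /orP[]/eqP->; rewrite eqxx andbT.
by rewrite o1.
Qed.

Lemma parent_indeg2 A v p q r :
  uniq A -> indeg A v = 2 -> (p, v) \in A -> (q, v) \in A -> p != q ->
  (r, v) \in A -> r \in [:: p; q].
Proof.
move=> uA i2 pv qv pq rv; apply: contraT; rewrite !inE negb_or => /andP[rp rq].
have : 3 <= indeg A v.
  apply: (size_le_count (l := [:: (p, v); (q, v); (r, v)])).
    by rewrite /= !inE !xpair_eqE !eqxx !andbT negb_or pq !(eq_sym _ r) rp rq.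
  by move=> b; rewrite !inE => /or3P[]/eqP->; rewrite eqxx andbT.
by rewrite i2.
Qed.

Lemma child_outdeg2 A v c d e :
  uniq A -> outdeg A v = 2 -> (v, c) \in A -> (v, d) \in A -> c != d ->
  (v, e) \in A -> e \in [:: c; d].
Proof.
move=> uA o2 vc vd cd ve; apply: contraT; rewrite !inE negb_or => /andP[ec ed].
have : 3 <= outdeg A v.
  apply: (size_le_count (l := [:: (v, c); (v, d); (v, e)])).
    by rewrite /= !inE !xpair_eqE !eqxx /= (negbTE cd) !(eq_sym _ e) (negbTE ec) ed.
  by move=> b; rewrite !inE => /or3P[]/eqP->; rewrite eqxx andbT.
by rewrite o2.
Qed.

Lemma parent_eq A p v : (p, v) \in A -> (forall q, (q, v) \in A -> q = p) -> parent A v = p.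
Proof.
rewrite /parent; elim: A => //= a A IH; rewrite inE => pvA H.
case: ifP => [/eqP e|ne] /=; first by apply: H; rewrite -e -surjective_pairing mem_head.
apply: IH => [|q qv]; last by apply: H; rewrite inE qv orbT.
by case/orP: pvA => // /eqP ea; rewrite -ea eqxx in ne.
Qed.

Lemma child_eq A c v : (v, c) \in A -> (forall d, (v, d) \in A -> d = c) -> child A v = c.
Proof.
rewrite /child; elim: A => //= a A IH; rewrite inE => vcA H.
case: ifP => [/eqP e|ne] /=; first by apply: H; rewrite -e -surjective_pairing mem_head.
apply: IH => [|d vd]; last by apply: H; rewrite inE vd orbT.
by case/orP: vcA => // /eqP ea; rewrite -ea eqxx in ne.
Qed.

Lemma suppress_eq A v p c :
  uniq A -> (p, v) \in A -> (v, c) \in A ->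
  (forall q, (q, v) \in A -> q = p) -> (forall d, (v, d) \in A -> d = c) ->
  suppress A v = (p, c) :: [seq a <- A | (a.1 != v) && (a.2 != v)].
Proof.
move=> uA pv vc Hp Hc.
have i1 : indeg A v = 1.
  rewrite /indeg (count_eq_size (l := [:: (p, v)])) // => -[q w] /=.
  rewrite inE xpair_eqE; case: (eqVneq w v) => [->|_]; last by rewrite !andbF.
  by rewrite !andbT; apply/idP/eqP => [/Hp|->].
have o1 : outdeg A v = 1.
  rewrite /outdeg (count_eq_size (l := [:: (v, c)])) // => -[w d] /=.
  rewrite inE xpair_eqE; case: (eqVneq w v) => [->|_]; last by rewrite !andbF.
  by rewrite andbT; apply/idP/eqP => [/Hc|->].
by rewrite /suppress i1 o1 (parent_eq pv Hp) (child_eq vc Hc).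
Qed.

Lemma tree_node_not_ret A v : is_tree_node A v -> ~~ is_ret A v.
Proof. by case/andP=> /eqP i1; rewrite /is_ret i1. Qed.

Lemma leaf_not_ret A v : is_leaf A v -> ~~ is_ret A v.
Proof. by case/andP=> _ /eqP o0; rewrite /is_ret o0 andbF. Qed.

Lemma HGT_lt A t a b : HGT_consistent A t -> (a, b) \in A -> ~~ is_ret A b -> Rlt (t a) (t b).
Proof.
case=> H _ _ ab nr; have [le eq_ret] := H _ _ ab.
case: (Req_dec (t a) (t b)) => [/eq_ret|]; [by rewrite (negbTE nr)|lra].
Qed.

Lemma perm_touches A L D :
  uniq A -> uniq L -> {subset L <= A} -> {in A, forall a, touches D a = (a \in L)} ->
  perm_eq A (L ++ [seq a <- A | ~~ touches D a]).
Proof.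
move=> uA uL LA HD; apply: uniq_perm => //.
  rewrite cat_uniq uL filter_uniq // andbT /=; apply/hasPn => a.
  by rewrite mem_filter => /andP[nt aA]; rewrite -HD.
move=> a; rewrite mem_cat mem_filter; case: (boolP (a \in A)) => aA.
  by rewrite andbT HD // orbN.
by rewrite andbF orbF; apply/esym/negP => /LA; rewrite (negbTE aA).
Qed.

Section Replacement.

(* [N ++ F] arises from [A ~ L ++ F] by deleting the arcs [L] at the nodes [D] and adding the
   shortcut arcs [N]; every arc of [L] leaving a surviving node with a strict label increase
   is witnessed by such an arc of [N], which keeps condition (2). *)
Variables (A L N F : arcs) (D : seq nat) (t : nat -> R).
Hypotheses (netA : network A) (binA : binary A) (hgtA : HGT_consistent A t).
Hypotheses (splitA : perm_eq A (L ++ F)) (uniqNF : uniq (N ++ F)).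
Hypothesis avoidD : {in N ++ F, forall a, ~~ touches D a}.
Hypothesis indeg_D : {in D, forall w, 0 < indeg A w}.
Hypothesis deg_NL : forall w, w \notin D -> indeg N w = indeg L w /\ outdeg N w = outdeg L w.
Hypothesis shortcut_N : forall a b, (a, b) \in N ->
  [/\ Rlt (t a) (t b), ~~ is_ret A b & clos_trans nat (arc_rel A) a b].
Hypothesis witness_L : forall a b, (a, b) \in L -> a \notin D -> Rlt (t a) (t b) ->
  exists2 b', (a, b') \in N & Rlt (t a) (t b').

Lemma deg_replace w : w \notin D ->
  indeg (N ++ F) w = indeg A w /\ outdeg (N ++ F) w = outdeg A w.
Proof.
move/deg_NL; rewrite /indeg /outdeg !(permP splitA) !count_cat.
by case=> -> ->.
Qed.

Lemma deg_replace_D w : w \in D -> indeg (N ++ F) w = 0 /\ outdeg (N ++ F) w = 0.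
Proof.
move=> wD; split; apply: count_pred0_in => -[a b] /avoidD;
  rewrite /touches negb_or => /andP[aD bD] /=.
  by apply: contraNneq bD => ->.
by apply: contraNneq aD => ->.
Qed.

Lemma mem_nodes_replace w : w \in nodes (N ++ F) = (w \in nodes A) && (w \notin D).
Proof.
case: (boolP (w \in D)) => wD; rewrite ?andbF ?andbT mem_nodes.
  by have [-> ->] := deg_replace_D wD.
by have [-> ->] := deg_replace wD; rewrite mem_nodes.
Qed.

Lemma node_type_replace w : w \notin D ->
  [/\ is_root (N ++ F) w = is_root A w, is_tree_node (N ++ F) w = is_tree_node A w,
      is_ret (N ++ F) w = is_ret A w & is_leaf (N ++ F) w = is_leaf A w].
Proof. by move/deg_replace=> [i o]; rewrite /is_root /is_tree_node /is_ret /is_leaf i o. Qed.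

Lemma arc_replace a b : (a, b) \in N ++ F ->
  (a, b) \in A \/ [/\ Rlt (t a) (t b), ~~ is_ret A b & clos_trans nat (arc_rel A) a b].
Proof.
rewrite mem_cat => /orP[/shortcut_N|abF]; first by right.
by left; rewrite (perm_mem splitA) mem_cat abF orbT.
Qed.

Lemma network_replace : network (N ++ F).
Proof.
have [uA acA rootA typA] := netA.
split => //.
- have path_A a b : clos_trans nat (arc_rel (N ++ F)) a b -> clos_trans nat (arc_rel A) a b.
    elim=> [{}a {}b /arc_replace [ab|[_ _ //]]|a' b' c _ ab _ bc]; first exact: t_step.
    exact: t_trans ab bc.
  by move=> v /path_A /acA.
- have nodesNF : perm_eq (nodes (N ++ F)) [seq w <- nodes A | w \notin D].
    apply: uniq_perm; rewrite ?filter_uniq ?undup_uniq // => w.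
    by rewrite mem_filter mem_nodes_replace andbC.
  rewrite (permP nodesNF) count_filter -rootA; apply: eq_in_count => w wA /=.
  case: (boolP (w \in D)) => wD; last by have [->] := deg_replace wD; rewrite andbT.
  by rewrite andbF; move: (indeg_D wD); case: (indeg A w).
- move=> v; rewrite mem_nodes_replace => /andP[vA vD].
  by have [-> -> -> ->] := node_type_replace vD; apply: typA.
Qed.

Lemma binary_replace : binary (N ++ F).
Proof.
move=> v; rewrite mem_nodes_replace => /andP[vA vD].
have [_ -> -> _] := node_type_replace vD; have [-> ->] := deg_replace vD.
exact: binA.
Qed.

Lemma HGT_replace : HGT_consistent (N ++ F) t.
Proof.
have [H1 H2 H3] := hgtA.
split.
- move=> u v uv; have vD : v \notin D.
    by move: (mem_nodes_tgt uv); rewrite mem_nodes_replace => /andP[].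
  have [_ _ -> _] := node_type_replace vD.
  case: (arc_replace uv) => [/H1 //|[lt _ _]].
  by split=> [|e]; [lra|rewrite e in lt; lra].
- move=> u; rewrite mem_nodes_replace => /andP[uA uD].
  have [_ ->] := deg_replace uD => /(H2 u uA) [v [uv lt]].
  have := perm_mem splitA (u, v); rewrite uv mem_cat => /esym/orP[uvL|uvF].
    by have [b ub lt'] := witness_L uvL uD lt; exists b; rewrite mem_cat ub.
  by exists v; rewrite mem_cat uvF orbT.
- move=> r u v rr ur vr; have rD : r \notin D.
    by move: (mem_nodes_tgt ur); rewrite mem_nodes_replace => /andP[].
  have [_ _ rr' _] := node_type_replace rD; rewrite rr' in rr.
  have inA x : (x, r) \in N ++ F -> (x, r) \in A.
    by case/arc_replace => // -[_]; rewrite rr.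
  exact: H3 rr (inA _ ur) (inA _ vr).
Qed.

Lemma replace_arcs : [/\ network (N ++ F), binary (N ++ F) & HGT_consistent (N ++ F) t].
Proof. by split; [exact: network_replace | exact: binary_replace | exact: HGT_replace]. Qed.

End Replacement.

Definition good_reduction (A : arcs) (t : nat -> R) (xy : nat * nat) : Prop :=
  [/\ network (reduce A xy), binary (reduce A xy), HGT_consistent (reduce A xy) t
    & size (reduce A xy) < size A].


Section CherryReduction.

Variables (A : arcs) (t : nat -> R) (pv v x y : nat).
Hypotheses (netA : network A) (binA : binary A) (hgtA : HGT_consistent A t).
Hypotheses (tree_v : is_tree_node A v) (pv_v : (pv, v) \in A).
Hypotheses (v_x : (v, x) \in A) (v_y : (v, y) \in A) (x_neq_y : x != y).
Hypotheses (leaf_x : is_leaf A x) (leaf_y : is_leaf A y).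

Let uA : uniq A. Proof. by case: netA. Qed.
Let acA : acyclic A. Proof. by case: netA. Qed.
Let indeg_v : indeg A v = 1. Proof. by case/andP: tree_v => /eqP. Qed.
Let outdeg_v : outdeg A v = 2. Proof. exact: (binA (mem_nodes_src v_x)).1. Qed.
Let indeg_x : indeg A x = 1. Proof. by case/andP: leaf_x => /eqP. Qed.
Let indeg_y : indeg A y = 1. Proof. by case/andP: leaf_y => /eqP. Qed.

Let parent_v q : (q, v) \in A -> q = pv. Proof. exact: parent_indeg1 uA indeg_v pv_v. Qed.
Let parent_x q : (q, x) \in A -> q = v. Proof. exact: parent_indeg1 uA indeg_x v_x. Qed.
Let parent_y q : (q, y) \in A -> q = v. Proof. exact: parent_indeg1 uA indeg_y v_y. Qed.
Let child_v c : (v, c) \in A -> c \in [:: x; y].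
Proof. exact: child_outdeg2 uA outdeg_v v_x v_y x_neq_y. Qed.

Let pv_neq_v : pv != v := arc_neq acA pv_v.
Let v_neq_x : v != x := arc_neq acA v_x.
Let v_neq_y : v != y := arc_neq acA v_y.
Let pv_neq_x : pv != x := leaf_neq_src leaf_x pv_v.

Lemma touches_cherry :
  {in A, forall a, touches [:: v; x] a = (a \in [:: (pv, v); (v, x); (v, y)])}.
Proof.
move=> [a b] ab; rewrite /touches /= !inE !xpair_eqE.
case: (eqVneq a v) => [av|/negbTE av].
  by subst a; have := child_v ab; rewrite !inE => /orP[]/eqP->; rewrite !eqxx ?orbT.
rewrite (negbTE (leaf_neq_src leaf_x ab)) orbF.
case: (eqVneq b v) => [bv|_]; first by subst b; rewrite (parent_v ab) eqxx.
by rewrite andbF; apply/eqP => bx; subst b; rewrite (parent_x ab) eqxx in av.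
Qed.

Lemma reduce_cherry : reduce A (x, y) = (pv, y) :: [seq a <- A | ~~ touches [:: v; x] a].
Proof.
have par_x : parent A x = v := parent_eq v_x parent_x.
have par_y : parent A y = v := parent_eq v_y parent_y.
have cherry : is_cherry A x y by rewrite /is_cherry x_neq_y leaf_x leaf_y par_x par_y /=.
rewrite /reduce cherry par_x (@suppress_eq _ v pv y).
- congr cons; rewrite -filter_predI; apply: eq_in_filter => -[a b] ab /=.
  rewrite touches_cherry // !inE !xpair_eqE; case: (eqVneq a v) => [av|av] /=.
    by subst a; have := child_v ab; rewrite !inE => /orP[]/eqP->; rewrite !eqxx ?orbT.
  case: (eqVneq b v) => [bv|_]; last by rewrite !andbF.
  by subst b; rewrite (parent_v ab) eqxx.
- by rewrite filter_uniq.
- by rewrite mem_filter pv_v xpair_eqE (negbTE v_neq_x) andbF.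
- by rewrite mem_filter v_y xpair_eqE eq_sym (negbTE x_neq_y) andbF.
- by move=> q; rewrite mem_filter => /andP[_ /parent_v].
- move=> c; rewrite mem_filter xpair_eqE eqxx /= => /andP[cx /child_v].
  by rewrite !inE (negbTE cx) => /eqP.
Qed.

Lemma cherry_reduction : good_reduction A t (x, y).
Proof.
rewrite /good_reduction reduce_cherry.
set F := [seq a <- A | _].
have splitA : perm_eq A ([:: (pv, v); (v, x); (v, y)] ++ F).
  apply: perm_touches touches_cherry => //.
    by rewrite /= !inE !xpair_eqE (negbTE pv_neq_v) (negbTE x_neq_y) andbF.
  by move=> a; rewrite !inE => /or3P[]/eqP->.
have t_pv_v := HGT_lt hgtA pv_v (tree_node_not_ret tree_v).
have t_v_y := HGT_lt hgtA v_y (leaf_not_ret leaf_y).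
suff [netR binR hgtR] : [/\ network ((pv, y) :: F), binary ((pv, y) :: F)
                          & HGT_consistent ((pv, y) :: F) t].
  by split=> //; rewrite (perm_size splitA).
apply: (replace_arcs (N := [:: (pv, y)]) (D := [:: v; x]) netA binA hgtA splitA).
- rewrite /= filter_uniq // andbT mem_filter; apply/andP => -[_ /parent_y pv_eq_v].
  by move: pv_neq_v; rewrite pv_eq_v eqxx.
- move=> a; rewrite inE => /orP[/eqP->|]; last by rewrite mem_filter => /andP[].
  by rewrite /touches /= !inE (negbTE pv_neq_v) (negbTE pv_neq_x) !(eq_sym y)
    (negbTE v_neq_y) (negbTE x_neq_y).
- by move=> w; rewrite !inE => /orP[]/eqP->; rewrite ?indeg_v ?indeg_x.
- move=> w; rewrite !inE negb_or => /andP[wv wx].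
  by rewrite /indeg /outdeg /= !(eq_sym _ w) (negbTE wv) (negbTE wx).
- move=> a b; rewrite inE => /eqP[-> ->]; split.
  + exact: Rlt_trans t_pv_v t_v_y.
  + exact: leaf_not_ret leaf_y.
  + by apply: (t_trans _ _ _ v); apply: t_step.
- move=> a b; rewrite !inE => /or3P[]/eqP[-> ->]; rewrite ?eqxx // => _ _.
  by exists y; rewrite ?mem_head //; exact: Rlt_trans t_pv_v t_v_y.
Qed.

End CherryReduction.

Section RetCherryReduction.

Variables (A : arcs) (t : nat -> R) (pu u u2 r x y : nat).
Hypotheses (netA : network A) (binA : binary A) (hgtA : HGT_consistent A t).
Hypotheses (tree_u : is_tree_node A u) (ret_r : is_ret A r).
Hypotheses (pu_u : (pu, u) \in A) (u_r : (u, r) \in A) (u_y : (u, y) \in A).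
Hypotheses (u2_r : (u2, r) \in A) (r_x : (r, x) \in A) (u2_neq_u : u2 != u).
Hypotheses (leaf_x : is_leaf A x) (leaf_y : is_leaf A y) (t_u_r : t u = t r).

Let uA : uniq A. Proof. by case: netA. Qed.
Let acA : acyclic A. Proof. by case: netA. Qed.
Let indeg_u : indeg A u = 1. Proof. by case/andP: tree_u => /eqP. Qed.
Let outdeg_u : outdeg A u = 2. Proof. exact: (binA (mem_nodes_src u_r)).1. Qed.
Let indeg_r : indeg A r = 2. Proof. exact: (binA (mem_nodes_src r_x)).2. Qed.
Let outdeg_r : outdeg A r = 1. Proof. by case/andP: ret_r => _ /eqP. Qed.
Let indeg_x : indeg A x = 1. Proof. by case/andP: leaf_x => /eqP. Qed.
Let indeg_y : indeg A y = 1. Proof. by case/andP: leaf_y => /eqP. Qed.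

Let u_neq_r : u != r := arc_neq acA u_r.
Let u_neq_y : u != y := arc_neq acA u_y.
Let r_neq_x : r != x := arc_neq acA r_x.
Let u2_neq_r : u2 != r := arc_neq acA u2_r.
Let pu_neq_u : pu != u := arc_neq acA pu_u.
Let u_neq_x : u != x := leaf_neq_src leaf_x u_r.
Let r_neq_y : r != y := leaf_neq_src leaf_y r_x.

Let parent_u q : (q, u) \in A -> q = pu. Proof. exact: parent_indeg1 uA indeg_u pu_u. Qed.
Let parent_x q : (q, x) \in A -> q = r. Proof. exact: parent_indeg1 uA indeg_x r_x. Qed.
Let parent_y q : (q, y) \in A -> q = u. Proof. exact: parent_indeg1 uA indeg_y u_y. Qed.
Let child_r c : (r, c) \in A -> c = x. Proof. exact: child_outdeg1 uA outdeg_r r_x. Qed.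
Let child_u c : (u, c) \in A -> c \in [:: r; y].
Proof. exact: child_outdeg2 uA outdeg_u u_r u_y r_neq_y. Qed.
Let parent_r q : (q, r) \in A -> q \in [:: u; u2].
Proof. by apply: parent_indeg2 uA indeg_r u_r u2_r _; rewrite eq_sym. Qed.

Let x_neq_y : x != y.
Proof. by apply: contra_neq u_neq_r => xy; rewrite (parent_x (_ : (u, x) \in A)) // xy. Qed.

Let pu_neq_r : pu != r.
Proof. by apply: contra_neq u_neq_x => pur; apply: child_r; rewrite -pur. Qed.

(* Condition (3) at [r]: as the arc [(u, r)] is horizontal, [(u2, r)] is not. *)
Let t_u2_r : Rlt (t u2) (t r).
Proof.
have [H1 _ H3] := hgtA; have [le _] := H1 _ _ u2_r.
have /(H3 _ _ _ ret_r u_r u2_r) neq : u <> u2 by apply/eqP; rewrite eq_sym.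
by case: (Rle_lt_or_eq_dec _ _ le) => // /(proj1 neq t_u_r).
Qed.

Lemma touches_ret_cherry : {in A, forall a, touches [:: u; r] a =
  (a \in [:: (pu, u); (u, r); (u, y); (u2, r); (r, x)])}.
Proof.
move=> [a b] ab; rewrite /touches /= !inE !xpair_eqE.
case: (eqVneq a u) => [au|au].
  by subst a; have := child_u ab; rewrite !inE => /orP[]/eqP->; rewrite !eqxx ?orbT.
case: (eqVneq a r) => [ar|ar].
  by subst a; rewrite (child_r ab) !eqxx ?orbT.
rewrite /= orbF; case: (eqVneq b u) => [bu|_]; first by subst b; rewrite (parent_u ab) eqxx.
case: (eqVneq b r) => [br|_]; last by rewrite !andbF.
subst b; have := parent_r ab; rewrite !inE (negbTE au) /= => ->.
by rewrite orbT.
Qed.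

Lemma reduce_ret_cherry :
  reduce A (x, y) = (pu, y) :: (u2, x) :: [seq a <- A | ~~ touches [:: u; r] a].
Proof.
have par_x : parent A x = r := parent_eq r_x parent_x.
have par_y : parent A y = u := parent_eq u_y parent_y.
have not_cherry : is_cherry A x y = false.
  by rewrite /is_cherry par_x par_y (eq_sym r u) (negbTE u_neq_r) !andbF.
have ret_cherry : is_ret_cherry A x y.
  by rewrite /is_ret_cherry x_neq_y leaf_x leaf_y par_x par_y ret_r u_r.
set A1 := [seq a <- A | a != (u, r)].
have A1_sub : {subset A1 <= A} by move=> a; rewrite mem_filter => /andP[].
have suppress_r : suppress A1 r = (u2, x) :: [seq a <- A1 | (a.1 != r) && (a.2 != r)].
  apply: suppress_eq.
  - exact: filter_uniq.
  - by rewrite mem_filter u2_r xpair_eqE (negbTE u2_neq_u).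
  - by rewrite mem_filter r_x xpair_eqE eq_sym (negbTE u_neq_r).
  - move=> q; rewrite mem_filter xpair_eqE eqxx andbT => /andP[qu /parent_r].
    by rewrite !inE (negbTE qu) => /eqP.
  - by move=> d /A1_sub /child_r.
set F1 := [seq a <- A1 | (a.1 != r) && (a.2 != r)].
have F1_sub : {subset F1 <= A} by move=> a; rewrite mem_filter => /andP[_ /A1_sub].
have suppress_u :
    suppress ((u2, x) :: F1) u = (pu, y) :: [seq a <- (u2, x) :: F1 | (a.1 != u) && (a.2 != u)].
  apply: suppress_eq.
  - rewrite /= !filter_uniq // andbT; apply: contra u2_neq_r => /F1_sub /parent_x ->.
    exact: eqxx.
  - by rewrite inE !mem_filter pu_u /= !xpair_eqE pu_neq_r (negbTE pu_neq_u) u_neq_r orbT.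
  - rewrite inE !mem_filter u_y /= !xpair_eqE u_neq_r (eq_sym y r) r_neq_y.
    by rewrite (negbTE r_neq_y) andbF orbT.
  - move=> q; rewrite inE xpair_eqE eq_sym (negbTE u_neq_x) andbF /=.
    by move/F1_sub/parent_u.
  - move=> d; rewrite inE xpair_eqE eq_sym (negbTE u2_neq_u) /= !mem_filter xpair_eqE eqxx /=.
    case/and3P=> _ dr /child_u; rewrite !inE (negbTE dr).
    by move/eqP.
rewrite /reduce not_cherry ret_cherry par_x par_y -/A1 suppress_r -/F1 suppress_u /=.
rewrite u2_neq_u eq_sym u_neq_x /=; congr (_ :: _ :: _).
rewrite -!filter_predI; apply: eq_filter => -[a b] /=.
rewrite /touches /= !inE xpair_eqE.
by case: (a == u); case: (b == u); case: (a == r); case: (b == r).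
Qed.

Lemma ret_cherry_reduction : good_reduction A t (x, y).
Proof.
rewrite /good_reduction reduce_ret_cherry.
set F := [seq a <- A | _].
have splitA : perm_eq A ([:: (pu, u); (u, r); (u, y); (u2, r); (r, x)] ++ F).
  apply: perm_touches touches_ret_cherry => //.
    rewrite /= !inE !xpair_eqE (negbTE pu_neq_u) (negbTE u_neq_r) (negbTE u_neq_x).
    by rewrite (negbTE r_neq_y) (eq_sym u u2) (negbTE u2_neq_u) (negbTE u2_neq_r) !andbF.
  by apply/allP; rewrite /= pu_u u_r u_y u2_r r_x.
have t_pu_u := HGT_lt hgtA pu_u (tree_node_not_ret tree_u).
have t_u_y := HGT_lt hgtA u_y (leaf_not_ret leaf_y).
have t_r_x := HGT_lt hgtA r_x (leaf_not_ret leaf_x).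
suff [netR binR hgtR] : [/\ network ((pu, y) :: (u2, x) :: F),
    binary ((pu, y) :: (u2, x) :: F) & HGT_consistent ((pu, y) :: (u2, x) :: F) t].
  by split=> //; rewrite (perm_size splitA) /= !ltnS leqW.
apply: (replace_arcs (N := [:: (pu, y); (u2, x)]) (D := [:: u; r]) netA binA hgtA splitA).
- have pu_y : (pu, y) \notin A by apply: contra pu_neq_u => /parent_y ->.
  have u2_x : (u2, x) \notin A by apply: contra u2_neq_r => /parent_x ->.
  rewrite /= filter_uniq // andbT inE negb_or xpair_eqE (eq_sym y) (negbTE x_neq_y) andbF.
  by rewrite !mem_filter (negbTE pu_y) (negbTE u2_x) !andbF.
- move=> a; rewrite !inE => /or3P[/eqP->|/eqP->|]; last by rewrite mem_filter => /andP[].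
  + by rewrite /touches /= !inE (negbTE pu_neq_u) (negbTE pu_neq_r) !(eq_sym y)
      (negbTE u_neq_y) (negbTE r_neq_y).
  + by rewrite /touches /= !inE (negbTE u2_neq_u) (negbTE u2_neq_r) !(eq_sym x)
      (negbTE u_neq_x) (negbTE r_neq_x).
- by move=> w; rewrite !inE => /orP[]/eqP->; rewrite ?indeg_u ?indeg_r.
- move=> w; rewrite !inE negb_or => /andP[wu wr].
  by rewrite /indeg /outdeg /= !(eq_sym _ w) (negbTE wu) (negbTE wr).
- move=> a b; rewrite !inE => /orP[]/eqP[-> ->]; split.
  + exact: Rlt_trans t_pu_u t_u_y.
  + exact: leaf_not_ret leaf_y.
  + by apply: (t_trans _ _ _ u); apply: t_step.
  + exact: Rlt_trans t_u2_r t_r_x.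
  + exact: leaf_not_ret leaf_x.
  + by apply: (t_trans _ _ _ r); apply: t_step.
- move=> a b; rewrite !inE => /or4P[|||/orP[]]/eqP[-> ->]; rewrite ?eqxx ?orbT // => _ _.
  + by exists y; rewrite ?mem_head //; exact: Rlt_trans t_pu_u t_u_y.
  + by exists x; rewrite ?inE ?eqxx ?orbT //; exact: Rlt_trans t_u2_r t_r_x.
Qed.

End RetCherryReduction.

Section MaximalInternalNode.

Variables (A : arcs) (t : nat -> R) (m : nat).
Hypotheses (netA : network A) (binA : binary A) (hgtA : HGT_consistent A t).
Hypothesis max_m : forall w, w \in nodes A -> internal A w -> Rle (t w) (t m).

Let uA : uniq A. Proof. by case: netA. Qed.

Lemma leaf_above_max a c : (a, c) \in A -> Rlt (t m) (t c) -> is_leaf A c.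
Proof.
move=> ac lt; have [_ _ _ typA] := netA; have cN := mem_nodes_tgt ac.
case/or4P: (typA c cN) => [/andP[/eqP i0 _]|tc|rc|//].
- by move: (indeg_gt0 ac); rewrite i0.
- by have := max_m cN; rewrite /internal tc => /(_ isT); lra.
- by have := max_m cN; rewrite /internal rc orbT => /(_ isT); lra.
Qed.

Lemma ret_leaf_child r : is_ret A r -> Rle (t m) (t r) -> exists2 x, (r, x) \in A & is_leaf A x.
Proof.
move=> ret_r le; have [_ H2 _] := hgtA.
have o1 : outdeg A r = 1 by case/andP: ret_r => _ /eqP.
have rN : r \in nodes A by rewrite mem_nodes o1 addn1.
have [x [rx lt]] := H2 r rN (ltac:(by rewrite o1)).
by exists x => //; apply: leaf_above_max rx _; lra.
Qed.

Lemma tree_parent_of_top_ret u r : is_ret A r -> (u, r) \in A -> t u = t r -> t r = t m ->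
  is_tree_node A u /\ exists2 y, (u, y) \in A & is_leaf A y.
Proof.
move=> ret_r ur tur trm; have [_ _ _ typA] := netA; have [_ H2 _] := hgtA.
have uN := mem_nodes_src ur.
have [y [uy lt]] := H2 u uN (outdeg_gt0 ur).
have y_neq_r : y != r by apply/eqP => yr; rewrite yr tur in lt; lra.
split; last by exists y => //; apply: leaf_above_max uy _; lra.
case/or4P: (typA u uN) => // /andP[_ /eqP o].
- by move: y_neq_r; rewrite (child_outdeg1 uA o ur uy) eqxx.
- by move: y_neq_r; rewrite (child_outdeg1 uA o ur uy) eqxx.
- by move: (outdeg_gt0 ur); rewrite o.
Qed.

Lemma max_tree_node_reducible : is_tree_node A m -> exists xy, good_reduction A t xy.
Proof.
move=> tree_m; have [_ _ _ typA] := netA; have [H1 H2 _] := hgtA.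
have i1 : indeg A m = 1 by case/andP: tree_m => /eqP.
have mN : m \in nodes A by rewrite mem_nodes i1.
have o2 : outdeg A m = 2 := (binA mN).1 tree_m.
have [y [my lt]] := H2 m mN (ltac:(by rewrite o2)).
have leaf_y := leaf_above_max my lt.
have [w mw w_neq_y] : exists2 w, (m, w) \in A & w != y by apply: exists_other_child; rewrite ?o2.
have [pm pm_m] := exists_parent (ltac:(by rewrite i1) : 0 < indeg A m).
case: (boolP (is_leaf A w)) => leaf_w.
  by exists (w, y); apply: cherry_reduction netA binA hgtA tree_m pm_m mw my w_neq_y leaf_w leaf_y.
have wN := mem_nodes_tgt mw.
have internal_w : internal A w.
  case/or4P: (typA w wN) => [/andP[/eqP i0 _]|tw|rw|lw]; rewrite /internal ?tw ?rw ?orbT //.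
    by move: (indeg_gt0 mw); rewrite i0.
  by rewrite lw in leaf_w.
have [le_mw eq_ret] := H1 _ _ mw.
have t_mw : t m = t w by have := max_m wN internal_w; lra.
have ret_w := eq_ret t_mw.
have [x wx leaf_x] := ret_leaf_child ret_w le_mw.
have [u2 u2w u2_neq_m] : exists2 u2, (u2, w) \in A & u2 != m.
  by apply: exists_other_parent => //; case/andP: ret_w.
exists (x, y); apply: ret_cherry_reduction netA binA hgtA tree_m ret_w pm_m mw my u2w wx
  u2_neq_m leaf_x leaf_y t_mw.
Qed.

Lemma max_ret_reducible : is_ret A m -> exists xy, good_reduction A t xy.
Proof.
move=> ret_m; have [_ _ H3] := hgtA.
have [x mx leaf_x] := ret_leaf_child ret_m (Rle_refl _).
have i2 : 2 <= indeg A m by case/andP: ret_m.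
have [p1 p1m] := exists_parent (leq_trans (isT : 0 < 2) i2).
have [p2 p2m p2_neq_p1] : exists2 p2, (p2, m) \in A & p2 != p1 by apply: exists_other_parent.
have p2_p1 : p1 <> p2 by apply/eqP; rewrite eq_sym.
have [u [u2 [um u2m tum u2_neq_u]]] :
    exists u u2, [/\ (u, m) \in A, (u2, m) \in A, t u = t m & u2 != u].
  case: (Req_dec (t p1) (t m)) => e1; first by exists p1, p2.
  case: (Req_dec (t p2) (t m)) => e2; first by exists p2, p1; rewrite eq_sym.
  by case: e1; apply/(H3 _ _ _ ret_m p1m p2m p2_p1).
have [tree_u [y uy leaf_y]] := tree_parent_of_top_ret ret_m um tum erefl.
have [pu pu_u] := exists_parent (ltac:(by case/andP: tree_u => /eqP ->) : 0 < indeg A u).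
exists (x, y); exact: ret_cherry_reduction netA binA hgtA tree_u ret_m pu_u um uy u2m mx
  u2_neq_u leaf_x leaf_y tum.
Qed.

End MaximalInternalNode.

Lemma exists_good_reduction A t :
  network A -> binary A -> HGT_consistent A t -> has (internal A) (nodes A) ->
  exists xy, good_reduction A t xy.
Proof.
move=> netA binA hgtA; rewrite has_filter => nonempty.
have [m] := exists_argmax t nonempty; rewrite mem_filter => /andP[internal_m _] max_m.
have max_m' w : w \in nodes A -> internal A w -> Rle (t w) (t m).
  by move=> wN wI; apply: max_m; rewrite mem_filter wI.
case/orP: (internal_m) => [tree_m|ret_m].
- exact: max_tree_node_reducible netA binA hgtA max_m' tree_m.
- exact: max_ret_reducible netA binA hgtA max_m' ret_m.
Qed.

Lemma root_unique A a b : network A -> a \in nodes A -> b \in nodes A ->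
  indeg A a = 0 -> indeg A b = 0 -> a = b.
Proof.
case=> _ _ rootA _ aN bN a0 b0; case: (eqVneq a b) => // ab.
have : 2 <= count (fun v => indeg A v == 0) (nodes A).
  apply: (size_le_count (l := [:: a; b])); first by rewrite /= inE ab.
  by move=> w; rewrite !inE => /orP[]/eqP->; rewrite ?aN ?bN ?a0 ?b0.
by rewrite rootA.
Qed.

Lemma orchard_no_internal A : network A -> ~~ has (internal A) (nodes A) -> orchard A.
Proof.
move=> netA /hasPn no_int; have [uA acA rootA typA] := netA.
exists [::]; rewrite /reduce_seq /=; split.
  by split=> // v /no_int; rewrite /internal negb_or => /andP[].
have root_src a b : (a, b) \in A -> is_root A a.
  move=> ab; have aN := mem_nodes_src ab.
  move: (typA a aN) (no_int a aN); rewrite /internal negb_or.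
  case/or4P=> [//|->//|->|/andP[_ /eqP o0]]; rewrite ?andbF //.
  by move: (outdeg_gt0 ab); rewrite o0.
case: A netA uA acA rootA typA no_int root_src => [|[a0 b0] A'] netA _ acA rootA _ _ root_src.
  by move: rootA.
have arc0 : (a0, b0) \in (a0, b0) :: A' := mem_head _ _.
have src_a0 a b : (a, b) \in (a0, b0) :: A' -> a = a0.
  move=> ab; case/andP: (root_src _ _ ab) => /eqP a_0 _.
  case/andP: (root_src _ _ arc0) => /eqP a0_0 _.
  exact: root_unique netA (mem_nodes_src ab) (mem_nodes_src arc0) a_0 a0_0.
have : size ((a0, b0) :: A') = outdeg ((a0, b0) :: A') a0.
  by rewrite /outdeg -count_predT; apply: eq_in_count => -[a b] /src_a0 /= ->; rewrite eqxx.
case/andP: (root_src _ _ arc0) => _ /eqP -> /eqP; rewrite eqSS size_eq0 => /eqP A'0; subst A'.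
have /negbTE ne := arc_neq acA arc0.
by rewrite /leaves /nodes /= inE ne /= /is_leaf /indeg /outdeg /= eqxx ne /= (eq_sym b0 a0) ne eqxx.
Qed.

Lemma orchard_of_HGT_size n A t :
  size A <= n -> network A -> binary A -> HGT_consistent A t -> orchard A.
Proof.
elim: n A => [|n IH] A sA netA binA hgtA.
  by move: sA netA; rewrite leqn0 size_eq0 => /eqP-> [].
case: (boolP (has (internal A) (nodes A))) => [has_int|no_int].
  have [xy [netR binR hgtR szR]] := exists_good_reduction netA binA hgtA has_int.
  have [S [treeS leafS]] := IH _ (ltac:(by rewrite -ltnS; apply: leq_trans szR sA)) netR binR hgtR.
  by exists (xy :: S).
exact: orchard_no_internal.
Qed.

Theorem mainTheorem4 (A : arcs) :
  network A -> binary A -> (exists t : nat -> R, HGT_consistent A t) -> orchard A.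
Proof. by move=> netA binA [t hgtA]; exact: orchard_of_HGT_size (leqnn _) netA binA hgtA. Qed.
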